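(* Let $M$ be a matroid of rank $r$ on a finite linearly ordered set $E$. Then $M=M(E,\mathcal V_0,\mathcal V_1,\dots,\mathcal V_{r-1})$.
   Context: Graded lexicographic order on $2^E$: $X\prec Y$ if $|X|<|Y|$, or $|X|=|Y|$ and $\min(X\triangle Y)\in X$; $\min\mathcal X$ is the $\prec$-smallest member. $X$ is $k$-closed in $M$ if $\mathrm{cl}_M(Y)\subseteq X$ for all $Y\subseteq X$ with $|Y|\le k$; $\mathrm{cl}_k(X)$ is the intersection of all $k$-closed supersets of $X$ (so $\mathrm{cl}_{-1}(X)=X$). For a flat $F$ of rank $k$, $U^*_F=\min\{U:\mathrm{cl}_{k-1}(U)=F\}$; $\mathcal U^*_k=\{U^*_F: F\text{ a flat of rank }k,\ |U^*_F|>k\}$. $V\subseteq U$ is consecutive in $U$ if there are no $e,g\in V$, $f\in U\setminus V$ with $e<f<g$. For $U\in\mathcal U^*_k$, $\mathcal V(U)$ is the set of consecutive $(k+1)$-subsets of $U$, and $\mathcal V_k=\bigcup_{U\in\mathcal U^*_k}\mathcal V(U)$. Erections: for a matroid $N$ of rank $\rho$ with independent sets $\mathcal I$, $T(N)=(E,\{I\in\mathcal I:|I|\le\rho-1\})$, and $N'$ is an erection of $N$ if $T(N')=N$ or $N'=N$. Knuth's procedure on input $N$ (rank $\rho$) and $\mathcal U\subseteq 2^E$: initialise $\mathcal H\leftarrow\mathcal U\cup\{F\cup\{e\}: F\text{ a hyperplane of }N,\ e\notin F\}$; while there are distinct $H,H'\in\mathcal H$ with $r_N(H\cap H')=\rho$,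 replace them by $H\cup H'$. It is known (Knuth) that the output does not depend on the choices and is the set of rank-$\rho$ flats of an erection of $N$, denoted $N\uparrow\mathcal U$ (equal to $N$ if the output is $\{E\}$). With $M_0$ the rank-$0$ matroid on $E$, $M(E,\mathcal U_0,\dots,\mathcal U_k)=(\cdots((M_0\uparrow\mathcal U_0)\uparrow\mathcal U_1)\cdots)\uparrow\mathcal U_k$. *)

(* Matroids on a finite linearly ordered ground set E,
   encoded as the finite type T : finOrderType (E = all of T), a matroid
   being given by its family of independent sets. *)
From HB Require Import structures.
From mathcomp Require Import all_boot all_order.
Set Implicit Arguments. Unset Strict Implicit. Unset Printing Implicit Defensive.

Section Matroids.
Variables (d : Order.disp_t) (T : finOrderType d).

Definition is_matroid (I : {set {set T}}) : Prop :=
  [/\ set0 \in I,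
      (forall A B : {set T}, B \in I -> A \subset B -> A \in I) &
      (forall A B : {set T}, A \in I -> B \in I -> #|A| < #|B| ->
          exists2 e, e \in B :\: A & e |: A \in I)].

Definition mrank (I : {set {set T}}) (X : {set T}) : nat :=
  \max_(Y in I | Y \subset X) #|Y|.

Definition rk (I : {set {set T}}) : nat := mrank I setT.

Definition mcl (I : {set {set T}}) (X : {set T}) : {set T} :=
  [set e | mrank I (e |: X) == mrank I X].

Definition flat (I : {set {set T}}) (X : {set T}) : bool := mcl I X == X.

(* hyperplane = flat of rank rk - 1 (so none when rk = 0) *)
Definition hyperplane (I : {set {set T}}) (X : {set T}) : bool :=
  flat I X && ((mrank I X).+1 == rk I).

(* closed_below I k X  <=>  X is (k-1)-closed:
   cl(Y) \subset X for all Y \subset X with |Y| <= k-1.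
   For k = 0 every set is (-1)-closed. *)
Definition closed_below (I : {set {set T}}) (k : nat) (X : {set T}) : bool :=
  [forall Y : {set T}, ((Y \subset X) && (#|Y| < k)) ==> (mcl I Y \subset X)].

(* cl_below I k X = cl_{k-1}(X): intersection of all (k-1)-closed supersets.
   In particular cl_below I 0 X = X = cl_{-1}(X). *)
Definition cl_below (I : {set {set T}}) (k : nat) (X : {set T}) : {set T} :=
  \bigcap_(Z : {set T} | (X \subset Z) && closed_below I k Z) Z.

Definition glex_lt (X Y : {set T}) : bool :=
  (#|X| < #|Y|) ||
  ((#|X| == #|Y|) &&
   [exists e, (e \in X :\: Y) &&
      [forall f, (f \in (X :\: Y) :|: (Y :\: X)) ==> (e <= f)%O]]).

(* the glex-smallest set satisfying P (set0 if there is none) *)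
Definition glex_min (P : pred {set T}) : {set T} :=
  odflt set0 [pick U | P U && [forall V, P V ==> (V == U) || glex_lt U V]].

Definition UstarF (I : {set {set T}}) (F : {set T}) : {set T} :=
  glex_min (fun U => cl_below I (mrank I F) U == F).

Definition Ustar (I : {set {set T}}) (k : nat) : {set {set T}} :=
  [set UstarF I F | F : {set T} &
     [&& flat I F, mrank I F == k & k < #|UstarF I F|]].

Definition consecutive (V U : {set T}) : bool :=
  [forall e, forall f, forall g,
     [&& e \in V, g \in V & f \in U :\: V] ==> ~~ ((e < f)%O && (f < g)%O)].

Definition Vfam (k : nat) (U : {set T}) : {set {set T}} :=
  [set V : {set T} | [&& V \subset U, #|V| == k.+1 & consecutive V U]].

Definition Vk (I : {set {set T}}) (k : nat) : {set {set T}} :=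
  \bigcup_(U in Ustar I k) Vfam k U.

Definition knuth_init (N : {set {set T}}) (U : {set {set T}}) : {set {set T}} :=
  U :|: [set e |: F | F in [set F0 : {set T} | hyperplane N F0], e in ~: F].

(* one merging step: if there are distinct H, H' in the family with
   r_N(H :&: H') = rho, replace them by H :|: H' (a canonical choice of the
   pair is made; by Knuth the result does not depend on the choices). *)
Definition knuth_step (N : {set {set T}}) (Hs : {set {set T}}) : {set {set T}} :=
  match [pick p : {set T} * {set T} |
           [&& p.1 \in Hs, p.2 \in Hs, p.1 != p.2 &
               mrank N (p.1 :&: p.2) == rk N]] with
  | Some p => (Hs :\ p.1 :\ p.2) :|: [set p.1 :|: p.2]
  | None => Hs
  end.

(* each effective step decreases the size of the family, so #|init|
   iterations reach the terminal family *)
Definition knuth_out (N : {set {set T}}) (U : {set {set T}}) : {set {set T}} :=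
  let H0 := knuth_init N U in iter #|H0| (knuth_step N) H0.

(* N ^ U : the erection of N (rank rho) whose rank-rho flats are the output
   of Knuth's procedure: its independent sets are the independent sets of N
   (all of size <= rho) together with the (rho+1)-sets contained in no
   member of the output. *)
Definition erect (N : {set {set T}}) (U : {set {set T}}) : {set {set T}} :=
  let rho := rk N in
  let Hs := knuth_out N U in
  [set X | ((X \in N) && (#|X| <= rho)) ||
           ((#|X| == rho.+1) && [forall H in Hs, ~~ (X \subset H)])].

Definition M0 : {set {set T}} := [set set0].

Definition Mgen (Us : seq {set {set T}}) : {set {set T}} := foldl erect M0 Us.

End Matroids.

(* Write N_k for the truncation of M to its independent sets of size at most
   k.  It suffices that erecting N_k along V_k gives N_(k+1), i.e. that the
   sets output by Knuth's procedure contain no independent (k+1)-set of M but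
   cover every dependent one.  The first holds since every output set has
   M-rank at most k: the initial sets do, and merging preserves it by
   submodularity.  For the second, a dependent (k+1)-set X either has rank
   below k, and then lies in a hyperplane-plus-point of N_k, or spans a rank-k
   flat F with more than k elements.  By minimality all k-subsets of
   U = U*_F are independent, so consecutive windows of U, which overlap in k
   elements, are merged into a single output set H of rank k.  Terminality
   makes H (k-1)-closed, hence H contains cl_(k-1)(U) = F. *)

From HB Require Import structures.
From mathcomp Require Import all_boot all_order.
From mathcomp Require Import zify.
Set Implicit Arguments. Unset Strict Implicit. Unset Printing Implicit Defensive.
Import Order.TTheory.

Section MatroidRank.
Variables (d : Order.disp_t) (T : finOrderType d).
Variable I : {set {set T}}.
Hypothesis HI : is_matroid I.

Local Notation r := (mrank I).

Lemma indep0 : set0 \in I.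
Proof. by case: HI. Qed.

Lemma indep_sub (A B : {set T}) : B \in I -> A \subset B -> A \in I.
Proof. by case: HI => _ sub _; apply: sub. Qed.

Lemma indep_aug (A B : {set T}) : A \in I -> B \in I -> #|A| < #|B| ->
  exists2 e, e \in B :\: A & e |: A \in I.
Proof. by case: HI => _ _ aug; apply: aug. Qed.

Lemma card_le_mrank (X Y : {set T}) : Y \in I -> Y \subset X -> #|Y| <= r X.
Proof.
by move=> YI YX; apply: (@leq_bigmax_cond _ (fun Y => (Y \in I) && (Y \subset X))); rewrite YI.
Qed.

Lemma mrank_witness (X : {set T}) : exists2 Y, (Y \in I) && (Y \subset X) & #|Y| = r X.
Proof.
have [|Y] := @eq_bigmax_cond _ [pred Y | (Y \in I) && (Y \subset X)] (fun Y => #|Y|).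
  by apply/card_gt0P; exists set0; rewrite inE indep0 sub0set.
by rewrite inE => YX rX; exists Y.
Qed.

Lemma mrank_le_card (X : {set T}) : r X <= #|X|.
Proof. by apply/bigmax_leqP => Y /andP[_ YX]; apply: subset_leq_card. Qed.

Lemma mrank_mono (X X' : {set T}) : X \subset X' -> r X <= r X'.
Proof.
move=> XX'; have [Y /andP[YI YX] <-] := mrank_witness X.
exact: card_le_mrank (subset_trans YX XX').
Qed.

Lemma mrank_indep (X : {set T}) : X \in I -> r X = #|X|.
Proof. by move=> XI; apply/eqP; rewrite eqn_leq mrank_le_card card_le_mrank. Qed.

Lemma indep_mrank_card (X : {set T}) : r X = #|X| -> X \in I.
Proof.
move=> rX; have [Y /andP[YI YX] rY] := mrank_witness X.
suff XY : X = Y by rewrite XY.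
by apply/esym/eqP; rewrite eqEcard YX rY rX leqnn.
Qed.

Lemma indep_extend (Z X : {set T}) j : Z \in I -> Z \subset X -> #|Z| <= j -> j <= r X ->
  exists Z', [/\ Z' \in I, Z \subset Z', Z' \subset X & #|Z'| = j].
Proof.
move=> ZI ZX Zj; have [n ->] : exists n, j = #|Z| + n by exists (j - #|Z|); lia.
elim: n => [|n IH] jX; first by exists Z; rewrite addn0.
have [|Z1 [Z1I ZZ1 Z1X cZ1]] := IH; first by lia.
have [B /andP[BI BX] cB] := mrank_witness X.
have [|e /setDP[eB eZ1] eZ1I] := indep_aug Z1I BI; first by lia.
exists (e |: Z1); split => //.
- exact: subset_trans ZZ1 (subsetUr _ _).
- by rewrite subUset sub1set Z1X (subsetP BX).
- by rewrite cardsU1 eZ1 cZ1; lia.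
Qed.

Lemma mrank_submod (A B : {set T}) : r (A :|: B) + r (A :&: B) <= r A + r B.
Proof.
have [Z /andP[ZI ZAB] cZ] := mrank_witness (A :&: B).
have ABU : A :&: B \subset A :|: B := subset_trans (subsetIl _ _) (subsetUl _ _).
have [|||Z' [Z'I ZZ' Z'AB cZ']] := @indep_extend Z (A :|: B) (r (A :|: B)) ZI.
- exact: subset_trans ZAB ABU.
- by rewrite cZ; apply: mrank_mono.
- by [].
have rA : #|Z' :&: A| <= r A.
  by apply: card_le_mrank (subsetIr _ _); apply: indep_sub Z'I (subsetIl _ _).
have rB : #|Z' :&: B| <= r B.
  by apply: card_le_mrank (subsetIr _ _); apply: indep_sub Z'I (subsetIl _ _).
have cUI := cardsUI (Z' :&: A) (Z' :&: B).
have UZ' : (Z' :&: A) :|: (Z' :&: B) = Z' by rewrite -setIUr; apply/setIidPl.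
rewrite UZ' in cUI.
have : #|Z| <= #|(Z' :&: A) :&: (Z' :&: B)|.
  apply: subset_leq_card; rewrite !subsetI ZZ'.
  by rewrite (subset_trans ZAB (subsetIl _ _)) (subset_trans ZAB (subsetIr _ _)).
lia.
Qed.

Lemma mrank_setU1 (e : T) (X : {set T}) : r (e |: X) <= (r X).+1.
Proof.
have [Y /andP[YI YX] <-] := mrank_witness (e |: X).
have : #|Y :\ e| <= r X.
  apply: card_le_mrank; first exact: indep_sub YI (subsetDl _ _).
  by apply/subsetP => x /setD1P[xe /(subsetP YX)]; rewrite in_setU1 (negbTE xe).
by rewrite (cardsD1 e Y); case: (e \in Y) => /=; lia.
Qed.

Lemma mrank_subU1 (e : T) (X : {set T}) : r X <= r (e |: X).
Proof. exact/mrank_mono/subsetUr. Qed.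

Lemma in_mcl (e : T) (X : {set T}) : (e \in mcl I X) = (r (e |: X) == r X).
Proof. by rewrite inE. Qed.

Lemma subset_mcl (X : {set T}) : X \subset mcl I X.
Proof. by apply/subsetP => e eX; rewrite in_mcl (setUidPr _) // sub1set. Qed.

Lemma mcl_mono (X Y : {set T}) : X \subset Y -> mcl I X \subset mcl I Y.
Proof.
move=> XY; apply/subsetP => e; rewrite !in_mcl => /eqP reX.
have := mrank_submod (e |: X) Y.
have -> : (e |: X) :|: Y = e |: Y by rewrite -setUA (setUidPr XY).
have : r X <= r ((e |: X) :&: Y) by apply: mrank_mono; rewrite subsetI subsetUr XY.
have := mrank_subU1 e Y.
by rewrite reX eqn_leq; lia.
Qed.

(* A larger independent subset of [mcl I X] could augment a basis of X
   by an element of the closure, raising the rank of X. *)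
Lemma mrank_mcl (X : {set T}) : r (mcl I X) = r X.
Proof.
apply/eqP; rewrite eqn_leq [r X <= _]mrank_mono ?subset_mcl // andbT leqNgt; apply/negP => lt_rX.
have [Y /andP[YI YX] cY] := mrank_witness X.
have [B /andP[BI BX] cB] := mrank_witness (mcl I X).
have [|e /setDP[eB eY] eYI] := indep_aug YI BI; first by rewrite cY cB.
have : #|e |: Y| <= r (e |: X) by apply: card_le_mrank eYI _; apply: setUS.
have /eqP -> : r (e |: X) == r X by rewrite -in_mcl (subsetP BX).
by rewrite cardsU1 eY -cY ltnn.
Qed.

Lemma mcl_idem (X : {set T}) : mcl I (mcl I X) = mcl I X.
Proof.
apply/eqP; rewrite eqEsubset subset_mcl andbT; apply/subsetP => e.
rewrite !in_mcl mrank_mcl => /eqP reX.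
have : r (e |: X) <= r (e |: mcl I X) by apply/mrank_mono/setUS/subset_mcl.
by rewrite eqn_leq mrank_subU1 andbT reX.
Qed.

Lemma closed_below_mcl k (X : {set T}) : closed_below I k (mcl I X).
Proof.
apply/forallP => Y; apply/implyP => /andP[YX _].
by rewrite -(mcl_idem X) mcl_mono.
Qed.

Lemma basis_spans (X Y : {set T}) : Y \in I -> Y \subset X -> #|Y| = r X ->
  X \subset mcl I Y.
Proof.
move=> YI YX cY; apply/subsetP => e eX; rewrite in_mcl (mrank_indep YI) eqn_leq.
rewrite -{2}(mrank_indep YI) mrank_subU1 andbT cY; apply: mrank_mono.
by rewrite subUset sub1set eX YX.
Qed.

Lemma dependent_mcl_elt (S : {set T}) : S \notin I ->
  exists Y c, [/\ Y \in I, Y \subset S :\ c, c \in S, c \in mcl I Y & #|Y| < #|S|].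
Proof.
move=> SI; have [Y /andP[YI YS] cY] := mrank_witness S.
have ltYS : #|Y| < #|S|.
  rewrite ltn_neqAle subset_leq_card // andbT; apply: contra SI => /eqP cYS.
  by apply: indep_mrank_card; rewrite -cY cYS.
have /subsetPn[c cS cY'] : ~~ (S \subset Y).
  by apply: contraTN ltYS => /subset_leq_card; rewrite -leqNgt.
exists Y, c; split => //.
- apply/subsetP => x xY; rewrite in_setD1 (subsetP YS) // andbT.
  by apply: contraNneq cY' => <-.
- rewrite in_mcl (mrank_indep YI) eqn_leq -{2}(mrank_indep YI) mrank_subU1 andbT cY.
  by apply: mrank_mono; rewrite subUset sub1set cS YS.
Qed.

End MatroidRank.

Section ClBelow.
Variables (d : Order.disp_t) (T : finOrderType d).
Variable I : {set {set T}}.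

Lemma mcl_sub_closed_below k (Z Y : {set T}) :
  closed_below I k Z -> Y \subset Z -> #|Y| < k -> mcl I Y \subset Z.
Proof. by move=> /forallP /(_ Y) /implyP cZ YZ Yk; apply: cZ; rewrite YZ Yk. Qed.

Lemma subset_cl_below k (X : {set T}) : X \subset cl_below I k X.
Proof. by apply/bigcapsP => Z /andP[]. Qed.

Lemma cl_below_min k (X Z : {set T}) :
  X \subset Z -> closed_below I k Z -> cl_below I k X \subset Z.
Proof. by move=> XZ cZ; apply: bigcap_inf; rewrite XZ cZ. Qed.

Lemma closed_below_cl_below k (X : {set T}) : closed_below I k (cl_below I k X).
Proof.
apply/forallP => Y; apply/implyP => /andP[YX Yk].
apply/bigcapsP => Z /andP[XZ cZ].
exact: mcl_sub_closed_below cZ (subset_trans YX (cl_below_min XZ cZ)) Yk.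
Qed.

Lemma cl_below0 (X : {set T}) : cl_below I 0 X = X.
Proof.
apply/eqP; rewrite eqEsubset subset_cl_below andbT; apply: cl_below_min => //.
by apply/forallP => Y; rewrite ltn0 andbF.
Qed.

End ClBelow.

Section Glex.
Variables (d : Order.disp_t) (T : finOrderType d).

Lemma has_least (A : {set T}) (x0 : T) : x0 \in A ->
  exists2 m, m \in A & forall x, x \in A -> (m <= x)%O.
Proof. by move=> x0A; have [m mA mmin] := arg_minP id x0A; exists m. Qed.

Lemma has_greatest (A : {set T}) (x0 : T) : x0 \in A ->
  exists2 m, m \in A & forall x, x \in A -> (x <= m)%O.
Proof. by move=> x0A; have [m mA mmax] := arg_maxP id x0A; exists m. Qed.

Lemma glex_lt_irr (X : {set T}) : ~~ glex_lt X X.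
Proof.
rewrite /glex_lt ltnn /=; apply/negP => /andP[_ /existsP[e]].
by rewrite setDv inE.
Qed.

Lemma glex_lt_total (X Y : {set T}) : X != Y -> glex_lt X Y || glex_lt Y X.
Proof.
move=> XY; rewrite /glex_lt; case: (ltngtP #|X| #|Y|) => //= cXY.
have [x xXY] : exists x, x \in (X :\: Y) :|: (Y :\: X).
  apply/set0Pn; apply: contra XY => /eqP XY0; apply/eqP/setP => z.
  by move/setP: XY0 => /(_ z); rewrite !inE; case: (z \in X); case: (z \in Y).
have [m mXY mmin] := has_least xXY.
move: (mXY); rewrite inE => /orP[mX|mY].
  apply/orP; left; apply/existsP; exists m; rewrite mX /=.
  by apply/forallP => f; apply/implyP; apply: mmin.
apply/orP; right; apply/existsP; exists m; rewrite mY /=.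
by apply/forallP => f; apply/implyP => fYX; apply: mmin; rewrite setUC.
Qed.

Lemma glex_lt_trans (X Y Z : {set T}) : glex_lt X Y -> glex_lt Y Z -> glex_lt X Z.
Proof.
rewrite /glex_lt.
case: (ltngtP #|X| #|Y|) => cXY /=; case: (ltngtP #|Y| #|Z|) => cYZ //=.
- by rewrite (ltn_trans cXY cYZ).
- by rewrite -cYZ cXY.
- by rewrite cXY cYZ.
move=> /existsP[e /andP[eXY /forallP eMin]] /existsP[f /andP[fYZ /forallP fMin]].
rewrite -cYZ cXY ltnn eqxx /=.
move: eXY fYZ; rewrite !inE => /andP[eY eX] /andP[fZ fY].
have {}eMin g : g \in (X :\: Y) :|: (Y :\: X) -> (e <= g)%O by apply/implyP.
have {}fMin g : g \in (Y :\: Z) :|: (Z :\: Y) -> (f <= g)%O by apply/implyP.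
have splitXZ g : g \in (X :\: Z) :|: (Z :\: X) ->
    (g \in (X :\: Y) :|: (Y :\: X)) || (g \in (Y :\: Z) :|: (Z :\: Y)).
  by rewrite !inE; case: (g \in X); case: (g \in Y); case: (g \in Z).
case: (ltgtP e f) => ef.
- apply/existsP; exists e; rewrite !inE eX andbT /=; apply/andP; split.
    by apply: contraTN ef => eZ; rewrite -leNgt fMin // !inE eZ eY.
  apply/forallP => g; apply/implyP => /splitXZ /orP[gXY|gYZ]; first exact: eMin.
  exact: le_trans (ltW ef) (fMin g gYZ).
- apply/existsP; exists f; rewrite !inE fZ /=; apply/andP; split.
    by apply: contraLR ef => fX; rewrite -leNgt eMin // !inE fY fX.
  apply/forallP => g; apply/implyP => /splitXZ /orP[gXY|gYZ]; last exact: fMin.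
  exact: le_trans (ltW ef) (eMin g gXY).
- by rewrite ef fY in eY.
Qed.

Lemma glex_least_exists n (S : {set {set T}}) U0 : #|S| <= n -> U0 \in S ->
  exists2 U, U \in S & forall V, V \in S -> (V == U) || glex_lt U V.
Proof.
elim: n S U0 => [|n IH] S U0 cS U0S.
  by move: cS; rewrite leqn0 => /eqP/cards0_eq S0; rewrite S0 inE in U0S.
have [/forall_inP U0min|] := boolP [forall V in S, (V == U0) || glex_lt U0 V].
  by exists U0.
move=> /forall_inPn[V VS /norP[VU0 VU0']].
have ltVU0 : glex_lt V U0 by have := glex_lt_total VU0; rewrite (negbTE VU0') orbF.
pose S' := [set W in S | glex_lt W U0].
have cS' : #|S'| <= n.
  suff /proper_card : S' \proper S by lia.
  rewrite properE; apply/andP; split; first by apply/subsetP => W; rewrite inE => /andP[].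
  by apply/subsetPn; exists U0; rewrite // inE (negbTE (glex_lt_irr U0)) andbF.
have [|m mS' mmin] := IH S' V cS'; first by rewrite inE VS ltVU0.
move: (mS'); rewrite inE => /andP[mS mU0].
exists m => // W WS; have [WU0|nWU0] := boolP (glex_lt W U0).
  by apply: mmin; rewrite inE WS WU0.
have [->|WnU0] := eqVneq W U0; first by rewrite mU0 orbT.
have := glex_lt_total WnU0; rewrite (negbTE nWU0) /= => U0W.
by rewrite (glex_lt_trans mU0 U0W) orbT.
Qed.

Lemma glex_minP (P : pred {set T}) U0 : P U0 ->
  P (glex_min P) /\ forall V, P V -> #|glex_min P| <= #|V|.
Proof.
move=> PU0; have [|U PU Umin] := @glex_least_exists _ [set U | P U] U0 (leqnn _).
  by rewrite inE.
rewrite /glex_min; case: pickP => [W /andP[PW /forallP Wmin] | noMin].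
  split => // V PV; have /implyP/(_ PV)/orP[/eqP ->//|] := Wmin V.
  by rewrite /glex_lt => /orP[/ltnW|/andP[/eqP -> _]].
exfalso; move: (noMin U); rewrite inE in PU; rewrite PU /=; move/negP; apply.
by apply/forallP => V; apply/implyP => PV; apply: Umin; rewrite inE.
Qed.

Lemma glex_min_cases (P : pred {set T}) : glex_min P = set0 \/ P (glex_min P).
Proof. by rewrite /glex_min; case: pickP => [W /andP[PW _]|_]; [right | left]. Qed.

End Glex.

Section Knuth.
Variables (d : Order.disp_t) (T : finOrderType d).
Variables (N : {set {set T}}) (U : {set {set T}}).

Definition knuth_terminal (Hs : {set {set T}}) : Prop :=
  forall a b : {set T}, a \in Hs -> b \in Hs -> a != b -> mrank N (a :&: b) != rk N.

Lemma knuth_stepP (Hs : {set {set T}}) :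
  (knuth_step N Hs = Hs /\ knuth_terminal Hs) \/
  (exists a b, [/\ a \in Hs, b \in Hs, a != b, mrank N (a :&: b) == rk N &
     knuth_step N Hs = (Hs :\ a :\ b) :|: [set a :|: b]]).
Proof.
rewrite /knuth_step; case: pickP => [[a b] /= /and4P[aH bH ab rab]|noPair].
  by right; exists a, b.
left; split => // a b aH bH ab.
by move: (noPair (a, b)); rewrite /= aH bH ab /= => ->.
Qed.

Lemma card_knuth_merge (Hs : {set {set T}}) (a b : {set T}) :
  a \in Hs -> b \in Hs -> a != b -> #|(Hs :\ a :\ b) :|: [set a :|: b]| < #|Hs|.
Proof.
move=> aH bH ab; have := leq_card_setU (Hs :\ a :\ b) [set a :|: b].
rewrite cards1 (cardsD1 a Hs) aH (cardsD1 b (Hs :\ a)) !inE eq_sym ab bH /=.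
by move=> /leq_of_leqif; rewrite !add1n ltnS addn1.
Qed.

Lemma knuth_step_terminal (Hs : {set {set T}}) : knuth_terminal Hs -> knuth_step N Hs = Hs.
Proof.
move=> term; case: (knuth_stepP Hs) => [[//]|[a [b [aH bH ab rab _]]]].
by move: (term a b aH bH ab); rewrite rab.
Qed.

Lemma knuth_out_terminal : knuth_terminal (knuth_out N U).
Proof.
rewrite /knuth_out; set H0 := knuth_init N U.
have progress i : knuth_terminal (iter i (knuth_step N) H0) \/
                  #|iter i (knuth_step N) H0| + i <= #|H0|.
  elim: i => [|i [term|IH]]; first by right; rewrite addn0.
    by left; rewrite iterS knuth_step_terminal.
  rewrite iterS; case: (knuth_stepP (iter i (knuth_step N) H0)) => [[-> term]|]; first by left.
  move=> [a [b [aH bH ab _ ->]]]; right.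
  by rewrite addnS; apply: leq_trans IH; rewrite ltn_add2r card_knuth_merge.
case: (progress #|H0|) => // empty a b aH.
move: empty; rewrite -{3}[#|H0|]add0n leq_add2r leqn0 => /eqP /cards0_eq H0'.
by rewrite H0' inE in aH.
Qed.

Lemma knuth_out_ind (Q : pred {set T}) :
  (forall A, A \in knuth_init N U -> Q A) ->
  (forall a b, Q a -> Q b -> mrank N (a :&: b) = rk N -> Q (a :|: b)) ->
  forall H, H \in knuth_out N U -> Q H.
Proof.
move=> Qinit Qmerge; rewrite /knuth_out; set H0 := knuth_init N U.
elim: #|H0| => [|i IH] H //=; first exact: Qinit.
case: (knuth_stepP (iter i (knuth_step N) H0)) => [[-> _]|[a [b [aH bH ab /eqP rab ->]]]].
  exact: IH.
rewrite !inE => /orP[/and3P[_ _ /IH] //|/eqP ->].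
by apply: Qmerge (IH _ aH) (IH _ bH) rab.
Qed.

Lemma knuth_out_cover (A : {set T}) : A \in knuth_init N U ->
  exists2 H, H \in knuth_out N U & A \subset H.
Proof.
move=> AH0; rewrite /knuth_out; set H0 := knuth_init N U.
elim: #|H0| => [|i [H HH AH]] /=; first by exists A.
case: (knuth_stepP (iter i (knuth_step N) H0)) => [[-> _]|[a [b [aH bH ab _ ->]]]].
  by exists H.
have [Hab|] := boolP ((H == a) || (H == b)).
  exists (a :|: b); first by rewrite !inE eqxx orbT.
  by apply: subset_trans AH _; case/orP: Hab => /eqP ->; rewrite ?subsetUl ?subsetUr.
by move=> /norP[Ha Hb]; exists H; rewrite // !inE Ha Hb HH.
Qed.

End Knuth.

Section Consecutive.
Variables (d : Order.disp_t) (T : finOrderType d).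

Lemma consecutive_refl (U : {set T}) : consecutive U U.
Proof.
apply/forallP => e; apply/forallP => f; apply/forallP => g; apply/implyP.
by rewrite setDv inE !andbF.
Qed.

Lemma consecutive_setD1_extremal (W U : {set T}) m : consecutive W U ->
  ((forall x, x \in W -> (x <= m)%O) \/ (forall x, x \in W -> (m <= x)%O)) ->
  consecutive (W :\ m) U.
Proof.
move=> cW mExt; apply/forallP => e; apply/forallP => f; apply/forallP => g.
apply/implyP => /and3P[eW gW fU]; apply/negP => /andP[ef fg].
move: eW gW fU; rewrite !inE => /andP[em eW] /andP[gm gW] /andP[/negP fWm fU].
have fm : f != m.
  apply/eqP => fm; case: mExt => [mMax|mMin].
    by move: fg; rewrite fm ltNge mMax.
  by move: ef; rewrite fm ltNge mMin.
have fW : f \notin W by apply/negP => fW; apply: fWm; rewrite fm fW.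
move: cW => /forallP/(_ e)/forallP/(_ f)/forallP/(_ g)/implyP.
by rewrite eW gW !inE fW fU ef fg => /(_ isT).
Qed.

Lemma min_max_distinct (W : {set T}) : 1 < #|W| ->
  exists mn mx, [/\ mn \in W, mx \in W, mn != mx,
    forall x, x \in W -> (mn <= x)%O & forall x, x \in W -> (x <= mx)%O].
Proof.
move=> W2; have [x0 x0W] : exists x0, x0 \in W by apply/card_gt0P; lia.
have [mx mxW mxMax] := has_greatest x0W.
have [mn mnW mnMin] := has_least x0W.
exists mn, mx; split => //; apply: contraTneq W2 => mnx.
have : W \subset [set mx].
  by apply/subsetP => x xW; rewrite inE eq_le mxMax //= -mnx mnMin.
by move/subset_leq_card; rewrite cards1 -leqNgt.
Qed.

End Consecutive.

Lemma subset_of_card (T : finType) (A : {set T}) j : j <= #|A| ->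
  exists2 S : {set T}, S \subset A & #|S| = j.
Proof.
elim: j => [|j IH] jA; first by exists set0; rewrite ?sub0set ?cards0.
have [|S SA cS] := IH; first by lia.
have /subsetPn[x xA xS] : ~~ (A \subset S) by apply/negP => /subset_leq_card; lia.
by exists (x |: S); rewrite ?subUset ?sub1set ?xA // cardsU1 xS cS.
Qed.

Section Truncation.
Variables (d : Order.disp_t) (T : finOrderType d).
Variable M : {set {set T}}.
Hypothesis HM : is_matroid M.

Local Notation r := (mrank M).

Definition trunc (k : nat) : {set {set T}} := [set X in M | #|X| <= k].

Lemma mrank_trunc k (X : {set T}) : mrank (trunc k) X = minn (r X) k.
Proof.
apply/eqP; rewrite eqn_leq; apply/andP; split.
  apply/bigmax_leqP => Y /andP[]; rewrite inE => /andP[YM Yk] YX.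
  by rewrite leq_min Yk card_le_mrank.
have [||Z [ZM _ ZX cZ]] := indep_extend HM (indep0 HM) (sub0set X) (j := minn (r X) k).
- by rewrite cards0.
- exact: geq_minl.
rewrite -cZ; apply: (@leq_bigmax_cond _ (fun Y => (Y \in trunc k) && (Y \subset X))).
by rewrite inE ZM ZX cZ geq_minr.
Qed.

Lemma rk_trunc k : k <= rk M -> rk (trunc k) = k.
Proof. by move=> kM; rewrite /rk mrank_trunc; apply/minn_idPr. Qed.

Lemma trunc_rk : trunc (rk M) = M.
Proof.
apply/setP => X; rewrite inE; have [XM|//] := boolP (X \in M).
by rewrite -(mrank_indep XM) mrank_mono ?subsetT.
Qed.

Lemma UstarF_sub (F : {set T}) : UstarF M F \subset F.
Proof.
rewrite /UstarF; case: (glex_min_cases (fun U => cl_below M (r F) U == F)) => [->|/eqP clU].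
  exact: sub0set.
by apply: subset_trans (subset_cl_below M (r F) _) _; rewrite clU.
Qed.

Section UstarFlat.
Variable F : {set T}.
Hypothesis flatF : flat M F.

Local Notation U := (UstarF M F).

Lemma UstarF_spec :
  cl_below M (r F) U = F /\ forall V, cl_below M (r F) V = F -> #|U| <= #|V|.
Proof.
have closedF : closed_below M (r F) F by rewrite -(eqP flatF) closed_below_mcl.
have PF : cl_below M (r F) F == F by rewrite eqEsubset subset_cl_below andbT cl_below_min.
have [/eqP clU Umin] := glex_minP (P := fun V => cl_below M (r F) V == F) PF.
by split => // V /eqP; apply: Umin.
Qed.

(* A dependent small subset of [U] has an element spanned by fewer than [r F]
   others, and removing it leaves [cl_below] unchanged, against minimality. *)
Lemma UstarF_indep (S : {set T}) : S \subset U -> #|S| <= r F -> S \in M.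
Proof.
move=> SU cS; apply: contraT => SnM; have [clU Umin] := UstarF_spec.
have [Y [c [YM YSc cS' cY cYS]]] := dependent_mcl_elt HM SnM.
have cU : c \in U := subsetP SU c cS'.
have YUc : Y \subset U :\ c := subset_trans YSc (setSD _ SU).
have UUc : U \subset cl_below M (r F) (U :\ c).
  apply/subsetP => x xU; have [->|xc] := eqVneq x c.
    apply: (subsetP (mcl_sub_closed_below (closed_below_cl_below _ _ _) _ _)) cY.
      exact: subset_trans YUc (subset_cl_below _ _ _).
    exact: leq_trans cYS cS.
  by apply: (subsetP (subset_cl_below _ _ _)); rewrite in_setD1 xc xU.
have clUc : cl_below M (r F) (U :\ c) = cl_below M (r F) U.
  apply/eqP; rewrite eqEsubset !cl_below_min ?closed_below_cl_below //.
  exact: subset_trans (subsetDl _ _) (subset_cl_below _ _ _).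
by have := Umin _ (etrans clUc clU); rewrite (cardsD1 c U) cU ltnn.
Qed.

Lemma mrank_UstarF : r F <= r U.
Proof.
have [clU _] := UstarF_spec.
have : F \subset mcl M U by rewrite -{1}clU cl_below_min ?subset_mcl ?closed_below_mcl.
by move/(mrank_mono HM); rewrite (mrank_mcl HM).
Qed.

End UstarFlat.
End Truncation.

Section ErectionStep.
Variables (d : Order.disp_t) (T : finOrderType d).
Variable M : {set {set T}}.
Hypothesis HM : is_matroid M.
Variable k : nat.
Hypothesis k_lt_rk : k < rk M.

Local Notation r := (mrank M).
Local Notation N := (trunc M k).
Local Notation Hinit := (knuth_init N (Vk M k)).
Local Notation Hout := (knuth_out N (Vk M k)).

Lemma rk_trunc_k : rk N = k.
Proof. exact/(rk_trunc HM)/ltnW. Qed.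

Lemma knuth_init_mrank A : A \in Hinit -> r A <= k.
Proof.
rewrite /knuth_init inE => /orP[/bigcupP[_ /imsetP[F] /[!inE] /and3P[_ /eqP rF _] ->]|].
  move=> /and3P[AU _ _]; rewrite -rF.
  exact/(mrank_mono HM)/(subset_trans AU)/UstarF_sub.
move=> /imset2P[F e /[!inE] /andP[_ /eqP] + _ ->].
rewrite rk_trunc_k (mrank_trunc HM) => rFk.
by apply: leq_trans (mrank_setU1 HM _ _) _; lia.
Qed.

Lemma knuth_out_mrank H : H \in Hout -> r H <= k.
Proof.
apply: (knuth_out_ind (Q := fun H => r H <= k)); first exact: knuth_init_mrank.
move=> a b ra rb; rewrite rk_trunc_k (mrank_trunc HM) => rab.
by have := mrank_submod HM a b; lia.
Qed.

Lemma knuth_out_eq a b : a \in Hout -> b \in Hout -> k <= r (a :&: b) -> a = b.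
Proof.
move=> aH bH rab; apply/eqP; apply: contraT => ab.
have := knuth_out_terminal aH bH ab.
by rewrite rk_trunc_k (mrank_trunc HM) (minn_idPr rab) eqxx.
Qed.

Lemma hyperplane_point_init (B : {set T}) h :
  B \in M -> h |: B \in M -> h \notin B -> #|B|.+1 = k -> h |: mcl M B \in Hinit.
Proof.
move=> BM hBM hB cB.
have rclB : r (mcl M B) = #|B| by rewrite (mrank_mcl HM) (mrank_indep BM).
have hclB : h \notin mcl M B.
  by rewrite in_mcl (mrank_indep BM) (mrank_indep hBM) cardsU1 hB eqn_leq ltnn.
rewrite inE; apply/orP; right; apply/imset2P.
apply: (Imset2spec (x1 := mcl M B) (x2 := h)) => //; last by rewrite inE.
have Bk : #|B| <= k by rewrite -cB.
rewrite inE /hyperplane rk_trunc_k (mrank_trunc HM) rclB (minn_idPl Bk) cB eqxx andbT.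
apply/eqP/setP => e.
have rek : r (e |: mcl M B) <= k by have := mrank_setU1 HM e (mcl M B); rewrite rclB cB.
rewrite -[in RHS](mcl_idem HM B) !in_mcl !(mrank_trunc HM) rclB.
by rewrite (minn_idPl Bk) (minn_idPl rek).
Qed.

Lemma indep_extend_pointed (Y S : {set T}) : Y \in M -> Y \subset S -> #|Y| < k -> k <= r S ->
  exists (B : {set T}) (h : T),
    [/\ Y \subset B, B \subset S, h \in S, B \in M & [/\ h |: B \in M, h \notin B & #|B|.+1 = k]].
Proof.
move=> YM YS cY kS.
have [||B [BM YB BS cB]] := indep_extend HM (j := k.-1) YM YS; [lia|lia|].
have [||B2 [B2M BB2 B2S cB2]] := indep_extend HM (j := k) BM BS; [lia|lia|].
have /subsetPn[h hB2 hB] : ~~ (B2 \subset B).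
  by apply/negP => /subset_leq_card; rewrite cB cB2; lia.
have hBM : h |: B \in M by apply: (indep_sub HM B2M); rewrite subUset sub1set hB2 BB2.
by exists B, h; split; rewrite ?(subsetP B2S) //; split => //; lia.
Qed.

(* Anything spanned by fewer than [k] elements of [H] lies in a
   hyperplane-plus-point of [N] meeting [H] in rank [k]; by terminality it
   was merged into [H]. *)
Lemma knuth_out_closed_below H : H \in Hout -> k <= r H -> closed_below M k H.
Proof.
move=> HH kH; apply/forallP => Y; apply/implyP => /andP[YH Yk].
have [Y' /andP[Y'M Y'Y] cY'] := mrank_witness HM Y.
have cY'k : #|Y'| < k by rewrite cY'; apply: leq_ltn_trans (mrank_le_card _ _) Yk.
have [B [h [Y'B BH hH BM [hBM hB cB]]]] :=
  indep_extend_pointed Y'M (subset_trans Y'Y YH) cY'k kH.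
have [H2 H2out hBH2] := knuth_out_cover (hyperplane_point_init BM hBM hB cB).
have BclB : h |: B \subset h |: mcl M B by apply/setUS/subset_mcl.
have -> : H = H2.
  have chB : #|h |: B| = k by rewrite cardsU1 hB.
  apply: knuth_out_eq => //; rewrite -chB; apply: card_le_mrank => //.
  by rewrite subsetI subUset sub1set hH BH (subset_trans BclB hBH2).
apply: subset_trans (mcl_mono HM (basis_spans HM Y'M Y'Y cY')) _.
apply: subset_trans hBH2; apply: subset_trans (subsetUr [set h] _).
by rewrite (mcl_idem HM) (mcl_mono HM).
Qed.

Lemma low_rank_covered X : r X < k -> exists2 H, H \in Hout & X \subset H.
Proof.
move=> rX; have [Y /andP[YM YX] cY] := mrank_witness HM X.
have cYk : #|Y| < k by rewrite cY.
have [B [h [YB _ _ BM [hBM hB cB]]]] :=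
  indep_extend_pointed (S := setT) YM (subsetT _) cYk (ltnW k_lt_rk).
have [H Hout_H sub] := knuth_out_cover (hyperplane_point_init BM hBM hB cB).
exists H => //; apply: subset_trans sub; apply: subset_trans (subsetUr [set h] _).
exact: subset_trans (basis_spans HM YM YX cY) (mcl_mono HM YB).
Qed.

(* Two windows that differ by their extreme elements share [k] elements of
   [U], which are independent; so they end up in the same output member. *)
Lemma consecutive_covered (U : {set T}) : U \in Ustar M k ->
  (forall S : {set T}, S \subset U -> #|S| <= k -> S \in M) ->
  forall W : {set T}, k < #|W| -> W \subset U -> consecutive W U ->
  exists2 H, H \in Hout & W \subset H.
Proof.
move=> UU Uind W kW; have [n cW] : exists n, #|W| = n + k.+1 by exists (#|W| - k.+1); lia.
clear kW; elim: n W cW => [|n IH] W cW WU consW.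
  apply: knuth_out_cover; rewrite /knuth_init inE; apply/orP; left.
  by apply/bigcupP; exists U => //; rewrite inE WU consW cW eqxx.
have [|mn [mx [mnW mxW mnx mnMin mxMax]]] := @min_max_distinct _ _ W; first by lia.
have cWmx : #|W :\ mx| = n + k.+1 by have := cardsD1 mx W; rewrite mxW cW; lia.
have cWmn : #|W :\ mn| = n + k.+1 by have := cardsD1 mn W; rewrite mnW cW; lia.
have WDU A : W :\ A \subset U := subset_trans (subsetDl _ _) WU.
have [H1 H1out WH1] := IH _ cWmx (WDU _) (consecutive_setD1_extremal consW (or_introl mxMax)).
have [H2 H2out WH2] := IH _ cWmn (WDU _) (consecutive_setD1_extremal consW (or_intror mnMin)).
have [|S SW cS] := @subset_of_card _ (W :\ mx :\ mn) k.
  by have := cardsD1 mn (W :\ mx); rewrite !inE mnx mnW cWmx; lia.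
have H12 : H1 = H2.
  apply: knuth_out_eq => //; rewrite -cS; apply: card_le_mrank.
    by apply: Uind; rewrite ?cS // (subset_trans SW) // (subset_trans (subsetDl _ _)).
  rewrite subsetI (subset_trans SW (subset_trans (subsetDl _ _) WH1)) /=.
  apply: subset_trans SW (subset_trans _ WH2); apply/subsetP => x.
  by rewrite !inE => /and3P[-> _ ->].
exists H1 => //; apply/subsetP => x xW; have [xmx|xmx] := eqVneq x mx.
  by rewrite xmx H12 (subsetP WH2) // in_setD1 mxW eq_sym mnx.
by rewrite (subsetP WH1) // in_setD1 xmx xW.
Qed.

Lemma flat_covered (F : {set T}) : flat M F -> r F = k -> k < #|F| ->
  exists2 H, H \in Hout & F \subset H.
Proof.
move=> flatF rF cF; have [clU _] := UstarF_spec HM flatF.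
have Uind (S : {set T}) : S \subset UstarF M F -> #|S| <= k -> S \in M.
  by rewrite -rF; apply: UstarF_indep.
have rU : k <= r (UstarF M F) by rewrite -rF mrank_UstarF.
suff [H Hout_H UH] : exists2 H, H \in Hout & UstarF M F \subset H.
  exists H => //; rewrite -clU rF cl_below_min //.
  by apply: knuth_out_closed_below => //; apply: leq_trans rU (mrank_mono HM UH).
case: (ltngtP #|UstarF M F| k) => cU.
- by have := mrank_le_card M (UstarF M F); lia.
- have UU : UstarF M F \in Ustar M k.
    by apply/imsetP; exists F; rewrite // inE flatF rF eqxx cU.
  exact: consecutive_covered UU Uind _ cU (subxx _) (consecutive_refl _).
have [k0|k_gt0] := posnP k.
  by move: cF; rewrite -clU rF k0 cl_below0 cU k0.
have [u uU] : exists u, u \in UstarF M F by apply/card_gt0P; rewrite cU.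
have UM : UstarF M F \in M by apply: Uind; rewrite ?cU.
have hB : u \notin UstarF M F :\ u by rewrite !inE eqxx.
have cB : #|UstarF M F :\ u|.+1 = k by rewrite -cU (cardsD1 u (UstarF M F)) uU.
have BM : UstarF M F :\ u \in M := indep_sub HM UM (subsetDl _ _).
have hBM : u |: (UstarF M F :\ u) \in M by rewrite setD1K.
have [H Hout_H sub] := knuth_out_cover (hyperplane_point_init BM hBM hB cB).
exists H => //; apply: subset_trans sub.
by rewrite -{1}(setD1K uU) setUS ?subset_mcl.
Qed.

Lemma dependent_covered X : X \notin M -> #|X| = k.+1 ->
  exists2 H, H \in Hout & X \subset H.
Proof.
move=> XnM cX; have [rXk|krX] := ltnP (r X) k; first exact: low_rank_covered.
have rX : r X <= k.
  rewrite -ltnS -cX ltn_neqAle mrank_le_card andbT.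
  by apply: contra XnM => /eqP /(indep_mrank_card HM).
have [|||H Hout_H clXH] := @flat_covered (mcl M X).
- by rewrite /flat (mcl_idem HM).
- by rewrite (mrank_mcl HM); apply/eqP; rewrite eqn_leq rX krX.
- by rewrite -cX subset_leq_card ?subset_mcl.
by exists H => //; apply: subset_trans clXH; apply: subset_mcl.
Qed.

Lemma erect_trunc : erect N (Vk M k) = trunc M k.+1.
Proof.
apply/setP => X; rewrite !inE rk_trunc_k.
case: (ltngtP #|X| k.+1) => cX.
- by rewrite -ltnS cX !andbT orbF.
- by rewrite leqNgt ltnW // !andbF.
rewrite cX ltnn !andbF andbT /=; apply/forall_inP/idP => [notCovered|XM H HH].
  apply: contraT => XnM; have [H HH XH] := dependent_covered XnM cX.
  by move: (notCovered H HH); rewrite XH.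
apply: contraTN (knuth_out_mrank HH) => XH.
by rewrite -ltnNge -cX -(mrank_indep XM) (mrank_mono HM XH).
Qed.

End ErectionStep.

Lemma Mgen_trunc (d : Order.disp_t) (T : finOrderType d) (M : {set {set T}}) :
  is_matroid M -> forall j, j <= rk M ->
  Mgen [seq Vk M k | k <- iota 0 j] = trunc M j.
Proof.
move=> HM; elim => [|j IH] jM.
  by apply/setP => X; rewrite !inE leqn0 cards_eq0; case: eqP => [->|]; rewrite ?andbF ?(indep0 HM).
rewrite -addn1 iotaD map_cat /Mgen foldl_cat -/(Mgen _) IH; last by lia.
by rewrite /= add0n addn1 erect_trunc.
Qed.

Theorem lemma5p7 (d : Order.disp_t) (T : finOrderType d)
  (M : {set {set T}}) (HM : is_matroid M) :
  M = Mgen [seq Vk M k | k <- iota 0 (rk M)].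
Proof. by rewrite (Mgen_trunc HM) // (trunc_rk HM). Qed.
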